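(* Let $0<L<\infty$, $\varphi\in(0,1)$, and $\kappa_f,\kappa_s,h_v,c_{p,f},\dot m_c,A_c,R,\mu_f,K_D,K_F,p_{HG}>0$, $T_b>0$, $q_{HG}\in\mathbb R$. Let $(T_f,T_s)$ be the unique solution on $[0,L]$ of $$-\varphi\kappa_fT_f''+c_{p,f}\frac{\dot m_c}{A_c}T_f'=h_v(T_s-T_f),\qquad (1-\varphi)\kappa_sT_s''=h_v(T_s-T_f)\quad\text{on }(0,L),$$ $$T_f(0)=T_s(0)=T_b,\quad (1-\varphi)\kappa_sT_s'(L)=q_{HG}-c_{p,f}\frac{\dot m_c}{A_c}(T_s(L)-T_f(L)),\quad T_f'(L)=\frac{h_vA_c}{c_{p,f}\dot m_c}(T_s(L)-T_f(L)).$$ Assume $q_{HG}>0$ and $$\frac{p_{HG}}{R\,T_f(L)}>\frac{\dot m_c}{\varphi A_c}\frac{1}{\sqrt{R\,T_b}}.$$ Define $$\overline N(y,\rho)=\frac{R\,(c_{p,f}\dot m_c)^{-1}h_vA_c\,\rho^2\,(T_s(y)-T_f(y))+\frac{\dot m_c}{A_c}\Big(\frac{\mu_f}{K_D}+\frac{\dot m_c}{K_FA_c}\Big)}{\varphi^{-2}\big(\frac{\dot m_c}{A_c}\big)^2-R\,T_f(y)\,\rho^2}.$$ Then the backward initial value problem $$\rho_f'(y)=\overline N(y,\rho_f(y))\,\rho_f(y),\ y\in(0,L),\qquad \rho_f(L)=\frac{p_{HG}}{R\,T_f(L)}$$ has a unique solution on $[0,L]$. In particular, this density $\rho_f$ is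 positive and strictly monotonically decreasing.
   Context: $\rho_f$ is the coolant density, $T_f,T_s$ fluid and solid temperatures, $R$ the specific gas constant, $\mu_f$ dynamic viscosity, $K_D$ permeability, $K_F$ Forchheimer coefficient, $p_{HG}$ hot gas pressure at the interface. *)

From Stdlib Require Import Reals.
From Coquelicot Require Import Coquelicot.
Open Scope R_scope.

Definition inI (L y : R) : Prop := 0 <= y <= L.

Definition cont_within_I (L : R) (f : R -> R) (y : R) : Prop :=
  filterlim f (within (inI L) (locally y)) (locally (f y)).

(* Classical C^2 solutions: Tf, Ts twice differentiable on (0,L), with
   Tf, Ts, Tf', Ts' continuous up to the boundary of [0,L]; the boundary
   values of the derivatives are those of the continuous extensions
   dTf, dTs (i.e. the one-sided derivatives). *)
Definition temp_solution (L phi kf ks hv cpf mc Ac Tb qHG : R)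
  (Tf Ts dTf dTs ddTf ddTs : R -> R) : Prop :=
  (forall y, 0 < y < L ->
     is_derive Tf y (dTf y) /\ is_derive Ts y (dTs y) /\
     is_derive dTf y (ddTf y) /\ is_derive dTs y (ddTs y)) /\
  (forall y, inI L y ->
     cont_within_I L Tf y /\ cont_within_I L Ts y /\
     cont_within_I L dTf y /\ cont_within_I L dTs y) /\
  (forall y, 0 < y < L ->
     - phi * kf * ddTf y + cpf * (mc / Ac) * dTf y = hv * (Ts y - Tf y) /\
     (1 - phi) * ks * ddTs y = hv * (Ts y - Tf y)) /\
  Tf 0 = Tb /\ Ts 0 = Tb /\
  (1 - phi) * ks * dTs L = qHG - cpf * (mc / Ac) * (Ts L - Tf L) /\
  dTf L = hv * Ac / (cpf * mc) * (Ts L - Tf L).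

Definition Nnum (Rg hv cpf mc Ac muf KD KF : R) (Tf Ts : R -> R) (y rho : R) : R :=
  Rg * / (cpf * mc) * hv * Ac * rho ^ 2 * (Ts y - Tf y)
  + mc / Ac * (muf / KD + mc / (KF * Ac)).

Definition Nden (Rg phi mc Ac : R) (Tf : R -> R) (y rho : R) : R :=
  / phi ^ 2 * (mc / Ac) ^ 2 - Rg * Tf y * rho ^ 2.

Definition Nbar (Rg phi hv cpf mc Ac muf KD KF : R) (Tf Ts : R -> R) (y rho : R) : R :=
  Nnum Rg hv cpf mc Ac muf KD KF Tf Ts y rho / Nden Rg phi mc Ac Tf y rho.

(* rho solves the backward IVP on [0,L]: continuous on [0,L], differentiable
   on (0,L) where the ODE holds with a nonvanishing denominator of Nbar
   (so that the right-hand side is defined), and the terminal condition. *)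
Definition density_solution (L Rg phi hv cpf mc Ac muf KD KF pHG : R)
  (Tf Ts : R -> R) (rho : R -> R) : Prop :=
  (forall y, inI L y -> cont_within_I L rho y) /\
  (forall y, 0 < y < L ->
     Nden Rg phi mc Ac Tf y (rho y) <> 0 /\
     is_derive rho y (Nbar Rg phi hv cpf mc Ac muf KD KF Tf Ts y (rho y) * rho y)) /\
  rho L = pHG / (Rg * Tf L).

(* The substitution z = rho^-2 turns the density equation into
     z' = 2 z (A (Ts - Tf) + B z) / (R Tf - c z),   c = (mc / (phi Ac))^2,
   with terminal value zL = rho(L)^-2; the subsonic hypothesis says exactly that
   c zL < R Tb. The temperature problem forces Ts >= Tf and Tf' > 0, hence Tf >= Tb:
   the gap Ts - Tf is positive at L (otherwise the boundary conditions would make the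
   solid rise faster than the fluid there), and if it were negative somewhere, the solid
   would rise faster than the fluid at its last root; both situations are ruled out by a
   mean value argument back to the previous root of the gap. So the right-hand side is
   nonnegative and regular for 0 <= z <= zL. Clamping z to [0, zL] makes it globally
   Lipschitz; Picard iteration gives a solution, which is nondecreasing (so below zL,
   where clamping is harmless) and positive by Gronwall, and rho = z^-1/2 is positive
   and decreasing. Conversely, for any solution the denominator of Nbar is negative at L
   and never vanishes, so rho^-2 solves the same z-equation below zL, and Gronwall's
   uniqueness identifies the two. *)

From Stdlib Require Import Reals Lra Psatz.
From Coquelicot Require Import Coquelicot.
Open Scope R_scope.

(** * Real functions on an interval *)

Lemma continuous_Rplus (f g : R -> R) x :
  continuous f x -> continuous g x -> continuous (fun t => f t + g t) x.
Proof. apply (continuous_plus f g). Qed.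

Lemma continuous_Rminus (f g : R -> R) x :
  continuous f x -> continuous g x -> continuous (fun t => f t - g t) x.
Proof. apply (continuous_minus f g). Qed.

Lemma continuous_Rmult (f g : R -> R) x :
  continuous f x -> continuous g x -> continuous (fun t => f t * g t) x.
Proof. apply (continuous_mult f g). Qed.

Lemma continuous_Ropp (f : R -> R) x : continuous f x -> continuous (fun t => - f t) x.
Proof. apply (continuous_opp f). Qed.

Lemma continuous_Rdiv (f g : R -> R) x : continuous f x -> continuous g x -> g x <> 0 ->
  continuous (fun t => f t / g t) x.
Proof. intros hf hg hg0. apply continuous_Rmult; [exact hf | now apply continuous_Rinv_comp]. Qed.

Lemma is_derive_Rmult (f g : R -> R) x df dg : is_derive f x df -> is_derive g x dg ->
  is_derive (fun t => f t * g t) x (df * g x + f x * dg).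
Proof. intros hf hg. apply (is_derive_mult f g x df dg hf hg). intros; apply Rmult_comm. Qed.

Lemma is_derive_inv_sqrt w : 0 < w -> is_derive (fun w => / sqrt w) w (- / (2 * w * sqrt w)).
Proof.
  intros hw. assert (hs : 0 < sqrt w) by (apply sqrt_lt_R0; lra).
  auto_derive; [repeat split; lra |]. rewrite (sqrt_sqrt w) by lra. field. lra.
Qed.

Lemma continuous_lt0_near (g : R -> R) x : continuous g x -> g x < 0 ->
  exists d, 0 < d /\ forall y, Rabs (y - x) < d -> g y < 0.
Proof.
  intros hg hx. apply continuity_pt_filterlim in hg.
  destruct (hg (- g x) ltac:(lra)) as [d [hd Hd]].
  exists d; split; [lra |]. intros y hy.
  destruct (Req_dec y x) as [-> | ne]; [lra |].
  specialize (Hd y (conj (conj I (not_eq_sym ne)) hy)). simpl in Hd. unfold R_dist in Hd.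
  apply Rabs_def2 in Hd. lra.
Qed.

Lemma continuous_gt0_near (g : R -> R) x : continuous g x -> 0 < g x ->
  exists d, 0 < d /\ forall y, Rabs (y - x) < d -> 0 < g y.
Proof.
  intros hg hx. destruct (continuous_lt0_near (fun t => - g t) x) as [d [hd Hd]].
  - now apply continuous_Ropp.
  - lra.
  - exists d; split; [exact hd |]. intros y hy. specialize (Hd y hy). lra.
Qed.

(* A function given on [0, L] is studied through its extension [fun t => f (clamp L t)],
   continuous on all of R when [f] is continuous within [0, L]. *)
Definition clamp (L y : R) : R := Rmax 0 (Rmin L y).

Lemma clamp_inI L y : 0 <= L -> inI L (clamp L y).
Proof. intros; unfold inI, clamp, Rmax, Rmin; repeat destruct Rle_dec; lra. Qed.

Lemma clamp_id L y : inI L y -> clamp L y = y.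
Proof. unfold inI, clamp, Rmax, Rmin; intros; repeat destruct Rle_dec; lra. Qed.

Lemma clamp_lipschitz L x y : 0 <= L -> Rabs (clamp L x - clamp L y) <= Rabs (x - y).
Proof.
  intros; unfold clamp, Rmax, Rmin; repeat destruct Rle_dec;
  unfold Rabs; repeat destruct Rcase_abs; lra.
Qed.

Lemma clamp_locally L x : 0 < x < L -> locally x (fun t => clamp L t = t).
Proof.
  intros hx. assert (hr : 0 < Rmin x (L - x)) by (apply Rmin_glb_lt; lra).
  exists (mkposreal _ hr). intros t ht. change (Rabs (t - x) < Rmin x (L - x)) in ht.
  pose proof (Rmin_l x (L - x)). pose proof (Rmin_r x (L - x)).
  apply Rabs_def2 in ht. apply clamp_id. unfold inI; lra.
Qed.

Lemma filterlim_clamp L x : 0 <= L ->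
  filterlim (clamp L) (locally x) (within (inI L) (locally (clamp L x))).
Proof.
  intros hL P [eps HP]. exists eps. intros t ht. apply HP; [| now apply clamp_inI].
  change (Rabs (clamp L t - clamp L x) < eps). change (Rabs (t - x) < eps) in ht.
  eapply Rle_lt_trans; [apply clamp_lipschitz; lra | exact ht].
Qed.

Lemma continuous_clamp L x : 0 <= L -> continuous (clamp L) x.
Proof.
  intros hL. eapply filterlim_filter_le_2; [| now apply filterlim_clamp].
  intros P. apply filter_le_within.
Qed.

Lemma continuous_clamp_comp L (f : R -> R) : 0 <= L ->
  (forall y, inI L y -> cont_within_I L f y) -> forall x, continuous (fun t => f (clamp L t)) x.
Proof.
  intros hL hf x. eapply filterlim_comp; [now apply filterlim_clamp |].
  apply hf, clamp_inI, hL.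
Qed.

Lemma cont_within_I_of_continuous L (f : R -> R) y : continuous f y -> cont_within_I L f y.
Proof. intros hf. eapply filterlim_filter_le_1; [apply filter_le_within | exact hf]. Qed.

Lemma cont_within_I_eq_at_0 L (f g : R -> R) : 0 < L ->
  cont_within_I L f 0 -> cont_within_I L g 0 -> (forall y, 0 < y <= L -> f y = g y) -> f 0 = g 0.
Proof.
  intros hL hf hg hfg.
  assert (hle : filter_le (at_right 0) (within (inI L) (locally 0))).
  { intros P [eps HP].
    assert (hr : 0 < Rmin eps L) by (apply Rmin_glb_lt; [apply cond_pos | lra]).
    exists (mkposreal _ hr). intros t ht ht0. change (Rabs (t - 0) < Rmin eps L) in ht.
    pose proof (Rmin_l eps L). pose proof (Rmin_r eps L).
    rewrite Rminus_0_r, Rabs_right in ht by lra.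
    apply HP; [change (Rabs (t - 0) < eps); rewrite Rminus_0_r, Rabs_right | unfold inI]; lra. }
  apply (filterlim_locally_unique (F := at_right 0) f); [now apply (filterlim_filter_le_1 _ hle) |].
  apply (filterlim_ext_loc g); [| now apply (filterlim_filter_le_1 _ hle)].
  exists (mkposreal _ hL). intros t ht ht0. change (Rabs (t - 0) < L) in ht.
  rewrite Rminus_0_r, Rabs_right in ht by lra. symmetry. apply hfg. lra.
Qed.

Lemma mean_value_interior (f df : R -> R) a b : a < b ->
  (forall x, a < x < b -> is_derive f x (df x)) ->
  (forall x, a <= x <= b -> continuous f x) ->
  exists c, a < c < b /\ f b - f a = df c * (b - a).
Proof.
  intros hab hd hc.
  assert (pr : forall c, a < c < b -> derivable_pt f c).
  { intros c hc'. exists (df c). now apply is_derive_Reals, hd. }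
  destruct (MVT f id a b pr (fun c _ => derivable_pt_id c) hab) as [c [P E]].
  - intros x hx. now apply continuity_pt_filterlim, hc.
  - intros x _. apply derivable_continuous_pt, derivable_pt_id.
  - exists c; split; [exact P |].
    rewrite (derive_pt_eq_0 _ _ _ (pr c P) (proj1 (is_derive_Reals _ _ _) (hd c P))),
      (derive_pt_eq_0 _ _ _ _ (derivable_pt_lim_id c)) in E.
    unfold id in E. lra.
Qed.

Section MonotoneOnInterval.
Variables (L : R) (f df : R -> R) (a b : R).
Hypotheses (ha : 0 <= a) (hb : b <= L)
  (hdf : forall x, a < x < b -> is_derive f x (df x))
  (hf : forall x, a <= x <= b -> continuous (fun t => f (clamp L t)) x).

Lemma mean_value_on_I : a < b -> exists c, a < c < b /\ f b - f a = df c * (b - a).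
Proof.
  intros hab.
  destruct (mean_value_interior (fun t => f (clamp L t)) df a b hab) as [c [hc E]]; [| exact hf |].
  - intros x hx. apply (is_derive_ext_loc f); [| now apply hdf].
    apply (filter_imp (fun t => clamp L t = t)); [now intros t -> | apply clamp_locally; lra].
  - exists c; split; [exact hc |]. rewrite !clamp_id in E; unfold inI; lra.
Qed.

Lemma le_of_derive_ge0 : a <= b -> (forall x, a < x < b -> 0 <= df x) -> f a <= f b.
Proof.
  intros hab hp. destruct (Req_dec a b) as [-> | ne]; [lra |].
  destruct mean_value_on_I as [c [hc E]]; [lra |]. specialize (hp c hc). nra.
Qed.

Lemma lt_of_derive_gt0 : a < b -> (forall x, a < x < b -> 0 < df x) -> f a < f b.
Proof. intros hab hp. destruct mean_value_on_I as [c [hc E]]; [lra |]. specialize (hp c hc). nra. Qed.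

Lemma ge_of_derive_le0 : a <= b -> (forall x, a < x < b -> df x <= 0) -> f b <= f a.
Proof.
  intros hab hp. destruct (Req_dec a b) as [-> | ne]; [lra |].
  destruct mean_value_on_I as [c [hc E]]; [lra |]. specialize (hp c hc). nra.
Qed.

End MonotoneOnInterval.

Lemma last_root (g : R -> R) a e : a <= e ->
  (forall x, a <= x <= e -> continuous g x) -> 0 <= g a -> g e < 0 ->
  exists s, a <= s < e /\ g s = 0 /\ forall y, s < y <= e -> g y < 0.
Proof.
  intros hae hc ha he.
  set (E := fun y => a <= y <= e /\ 0 <= g y).
  destruct (completeness E) as [s [hub hlub]].
  { exists e; intros y [hy _]; lra. }
  { exists a; split; [lra | exact ha]. }
  assert (has : a <= s) by (apply hub; split; [lra | exact ha]).
  assert (hse : s <= e) by (apply hlub; intros y [hy _]; lra).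
  assert (hneg : forall y, s < y <= e -> g y < 0).
  { intros y hy. destruct (Rlt_le_dec (g y) 0) as [h | h]; [exact h |].
    assert (y <= s) by (apply hub; split; [lra | exact h]). lra. }
  assert (gs0 : 0 <= g s).
  { destruct (Rle_lt_dec 0 (g s)) as [h | h]; [exact h | exfalso].
    destruct (continuous_lt0_near g s (hc s ltac:(lra)) h) as [d [hd Hd]].
    assert (s <= s - d / 2); [| lra].
    apply hlub. intros y [hy gy]. destruct (Rle_lt_dec y (s - d / 2)) as [h1 | h1]; [exact h1 | exfalso].
    assert (y <= s) by (apply hub; split; assumption).
    assert (g y < 0); [apply Hd; apply Rabs_def1 |]; lra. }
  assert (hse' : s < e) by (destruct (Req_dec s e); [subst; lra | lra]).
  exists s; split; [lra | split; [| exact hneg]].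
  destruct (Rle_lt_dec (g s) 0) as [h | h]; [lra | exfalso].
  destruct (continuous_gt0_near g s (hc s ltac:(lra)) h) as [d [hd Hd]].
  set (y := Rmin (s + d / 2) e).
  assert (s < y <= e) by (unfold y, Rmin; destruct Rle_dec; lra).
  assert (0 < g y); [apply Hd; apply Rabs_def1; unfold y, Rmin; destruct Rle_dec; lra |].
  specialize (hneg y ltac:(lra)). lra.
Qed.

Lemma derive_lt0_right (w : R -> R) b l : is_derive w b l -> l < 0 -> w b <= 0 ->
  exists e, 0 < e /\ forall y, b < y < b + e -> w y < 0.
Proof.
  intros hd hl hw. apply is_derive_Reals in hd.
  destruct (hd (- l / 2) ltac:(lra)) as [d Hd].
  exists d; split; [apply cond_pos |]. intros y hy.
  specialize (Hd (y - b) ltac:(lra) ltac:(rewrite Rabs_right; lra)).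
  replace (b + (y - b)) with y in Hd by ring.
  apply Rabs_def2 in Hd.
  assert (hq : (w y - w b) / (y - b) < l / 2) by lra.
  apply (Rmult_lt_compat_r (y - b)) in hq; [| lra].
  unfold Rdiv in hq. rewrite Rmult_assoc, Rinv_l in hq by lra. nra.
Qed.

Lemma bounded_on_I L (f : R -> R) : 0 <= L ->
  (forall x, continuous (fun t => f (clamp L t)) x) -> exists m, forall t, inI L t -> f t <= m.
Proof.
  intros hL hf.
  destruct (continuity_ab_maj (fun t => f (clamp L t)) 0 L hL) as [m [Hm _]].
  { intros c _. apply continuity_pt_filterlim, hf. }
  exists (f (clamp L m)). intros t ht. specialize (Hm t ht). now rewrite clamp_id in Hm.
Qed.

Lemma lipschitz_ode_unique_backward L (G : R -> R -> R) K (z1 z2 : R -> R) a : 0 <= a <= L ->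
  (forall t w1 w2, Rabs (G t w1 - G t w2) <= K * Rabs (w1 - w2)) ->
  (forall x, a < x < L -> is_derive z1 x (G x (z1 x))) ->
  (forall x, a < x < L -> is_derive z2 x (G x (z2 x))) ->
  (forall x, a <= x <= L -> continuous (fun t => z1 (clamp L t)) x) ->
  (forall x, a <= x <= L -> continuous (fun t => z2 (clamp L t)) x) ->
  z1 L = z2 L -> z1 a = z2 a.
Proof.
  intros ha hLip hd1 hd2 hc1 hc2 hL.
  set (q t := z1 t - z2 t). set (dG t := G t (z1 t) - G t (z2 t)).
  (* Gronwall: [q^2 exp (2 K t)] is nondecreasing, and it vanishes at [L]. *)
  assert (Hm : q a * q a * exp (2 * K * a) <= q L * q L * exp (2 * K * L)).
  { apply (le_of_derive_ge0 L (fun t => q t * q t * exp (2 * K * t))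
      (fun t => (dG t * q t + q t * dG t) * exp (2 * K * t) + q t * q t * (2 * K * exp (2 * K * t))) a L);
      try lra.
    - intros x hx.
      apply (is_derive_Rmult (fun t => q t * q t) (fun t => exp (2 * K * t))); [| auto_derive; [exact I | ring]].
      assert (is_derive q x (dG x)) by (apply (is_derive_minus z1 z2); auto).
      now apply is_derive_Rmult.
    - intros x hx. apply continuous_Rmult; [apply continuous_Rmult; apply continuous_Rminus; auto |].
      apply continuous_exp_comp, continuous_Rmult; [apply continuous_const | apply continuous_clamp; lra].
    - intros x hx. pose proof (exp_pos (2 * K * x)).
      assert (hprod : Rabs (dG x * q x) <= K * (q x * q x)).
      { rewrite Rabs_mult, <- (Rabs_right (q x * q x)), Rabs_mult, <- Rmult_assoc
          by (apply Rle_ge, Rle_0_sqr).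
        apply Rmult_le_compat_r; [apply Rabs_pos | apply hLip]. }
      apply Rabs_le_between in hprod.
      replace ((dG x * q x + q x * dG x) * exp (2 * K * x) + q x * q x * (2 * K * exp (2 * K * x)))
        with (2 * (dG x * q x + K * (q x * q x)) * exp (2 * K * x)) by ring.
      apply Rmult_le_pos; lra. }
  assert (hqL : q L = 0) by (unfold q; lra).
  rewrite hqL in Hm. pose proof (exp_pos (2 * K * a)).
  assert (q a * q a <= 0) by nra.
  assert (q a = 0) by nra. unfold q in *. lra.
Qed.

(** * The temperature profile *)

Section TemperatureProfile.
Variables (L phi kf ks hv cpf mc Ac Tb qHG : R) (Tf Ts dTf dTs ddTf ddTs : R -> R).
Hypotheses (hL : 0 < L) (hphi : 0 < phi < 1) (hkf : 0 < kf) (hks : 0 < ks) (hhv : 0 < hv)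
  (hcpf : 0 < cpf) (hmc : 0 < mc) (hAc : 0 < Ac) (hq : 0 < qHG)
  (hT : temp_solution L phi kf ks hv cpf mc Ac Tb qHG Tf Ts dTf dTs ddTf ddTs).

Let kf_eff := phi * kf.
Let ks_eff := (1 - phi) * ks.
Let conv := cpf * (mc / Ac).
Let gap t := Ts t - Tf t.
Let dgap t := dTs t - dTf t.
(* [exp (- conv / kf_eff * t)] is an integrating factor for the fluid equation:
   [flux' = dflux] involves the gap only. *)
Let flux t := exp (- (conv / kf_eff) * t) * dTf t.
Let dflux t := - (hv / kf_eff) * exp (- (conv / kf_eff) * t) * gap t.

Lemma kf_eff_pos : 0 < kf_eff. Proof. unfold kf_eff; nra. Qed.
Lemma ks_eff_pos : 0 < ks_eff. Proof. unfold ks_eff; nra. Qed.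
Lemma conv_pos : 0 < conv.
Proof. unfold conv. apply Rmult_lt_0_compat; [lra | apply Rdiv_lt_0_compat; lra]. Qed.

Lemma temp_derivatives y : 0 < y < L -> is_derive Tf y (dTf y) /\ is_derive Ts y (dTs y) /\
  is_derive dTf y (ddTf y) /\ is_derive dTs y (ddTs y).
Proof. destruct hT as [h _]; auto. Qed.

Lemma temp_continuous (f : R -> R) : f = Tf \/ f = Ts \/ f = dTf \/ f = dTs ->
  forall x, continuous (fun t => f (clamp L t)) x.
Proof.
  destruct hT as [_ [hc _]].
  intros hf; apply continuous_clamp_comp; [lra |]. intros y hy.
  destruct (hc y hy) as [? [? [? ?]]]. now repeat destruct hf as [-> | hf]; subst.
Qed.

Lemma fluid_equation y : 0 < y < L -> kf_eff * ddTf y = conv * dTf y - hv * gap y.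
Proof. intros hy. destruct hT as [_ [_ [h _]]]. destruct (h y hy). unfold kf_eff, conv, gap. lra. Qed.

Lemma solid_equation y : 0 < y < L -> ks_eff * ddTs y = hv * gap y.
Proof. intros hy. destruct hT as [_ [_ [h _]]]. now destruct (h y hy). Qed.

Lemma gap_0 : gap 0 = 0.
Proof. destruct hT as [_ [_ [_ [h1 [h2 _]]]]]. unfold gap. lra. Qed.

Lemma dTs_L : ks_eff * dTs L = qHG - conv * gap L.
Proof. destruct hT as [_ [_ [_ [_ [_ [h _]]]]]]; exact h. Qed.

Lemma dTf_L : dTf L = hv / conv * gap L.
Proof. destruct hT as [_ [_ [_ [_ [_ [_ h]]]]]]. rewrite h. unfold conv, gap. field. lra. Qed.

Lemma gap_continuous x : continuous (fun t => gap (clamp L t)) x.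
Proof. apply continuous_Rminus; apply temp_continuous; tauto. Qed.

Lemma dgap_continuous x : continuous (fun t => dgap (clamp L t)) x.
Proof. apply continuous_Rminus; apply temp_continuous; tauto. Qed.

Lemma flux_continuous x : continuous (fun t => flux (clamp L t)) x.
Proof.
  apply continuous_Rmult; [| apply temp_continuous; tauto].
  apply continuous_exp_comp, continuous_Rmult; [apply continuous_const | now apply continuous_clamp; lra].
Qed.

Lemma gap_derive y : 0 < y < L -> is_derive gap y (dgap y).
Proof. intros hy. destruct (temp_derivatives y hy) as [? [? _]]. now apply (is_derive_minus Ts Tf). Qed.

Lemma dgap_derive y : 0 < y < L -> is_derive dgap y (ddTs y - ddTf y).
Proof. intros hy. destruct (temp_derivatives y hy) as [_ [_ [? ?]]]. now apply (is_derive_minus dTs dTf). Qed.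

Lemma flux_derive y : 0 < y < L -> is_derive flux y (dflux y).
Proof.
  intros hy. destruct (temp_derivatives y hy) as [_ [_ [hd _]]].
  pose proof (fluid_equation y hy). pose proof kf_eff_pos.
  set (k := - (conv / kf_eff)).
  assert (he : is_derive (fun t => exp (k * t)) y (k * exp (k * y))) by (auto_derive; [exact I | ring]).
  unfold dflux; fold k.
  replace (- (hv / kf_eff) * exp (k * y) * gap y) with (k * exp (k * y) * dTf y + exp (k * y) * ddTf y).
  - exact (is_derive_Rmult _ _ y _ _ he hd).
  - assert (ddTf y = (conv * dTf y - hv * gap y) / kf_eff) as ->
      by (apply Rmult_eq_reg_l with kf_eff; [field_simplify |]; lra).
    unfold k. field. lra.
Qed.

Lemma dTf_of_flux y : dTf y = flux y * exp (conv / kf_eff * y).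
Proof.
  unfold flux. rewrite Rmult_comm, <- Rmult_assoc, <- exp_plus.
  replace (conv / kf_eff * y + - (conv / kf_eff) * y) with 0 by ring. rewrite exp_0; ring.
Qed.

Lemma flux_monotone a b : 0 <= a <= b -> b <= L ->
  (forall y, a < y < b -> 0 <= gap y) -> flux b <= flux a.
Proof.
  intros hab hb hgap. apply (ge_of_derive_le0 L flux dflux a b); try lra.
  - intros x hx. apply flux_derive. lra.
  - intros x _. apply flux_continuous.
  - intros x hx. pose proof (hgap x hx). pose proof kf_eff_pos.
    pose proof (exp_pos (- (conv / kf_eff) * x)). unfold dflux.
    assert (0 <= hv / kf_eff) by (apply Rlt_le, Rdiv_lt_0_compat; lra).
    assert (0 <= hv / kf_eff * exp (- (conv / kf_eff) * x) * gap x)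
      by (apply Rmult_le_pos; [apply Rmult_le_pos |]; lra).
    lra.
Qed.

Lemma flux_antitone a b : 0 <= a <= b -> b <= L ->
  (forall y, a < y < b -> gap y <= 0) -> flux a <= flux b.
Proof.
  intros hab hb hgap. apply (le_of_derive_ge0 L flux dflux a b); try lra.
  - intros x hx. apply flux_derive. lra.
  - intros x _. apply flux_continuous.
  - intros x hx. pose proof (hgap x hx). pose proof kf_eff_pos.
    pose proof (exp_pos (- (conv / kf_eff) * x)). unfold dflux.
    assert (0 <= hv / kf_eff) by (apply Rlt_le, Rdiv_lt_0_compat; lra).
    assert (0 <= hv / kf_eff * exp (- (conv / kf_eff) * x) * - gap x)
      by (apply Rmult_le_pos; [apply Rmult_le_pos |]; lra).
    lra.
Qed.

Lemma dTs_antitone a b : 0 <= a <= b -> b <= L ->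
  (forall y, a < y < b -> gap y <= 0) -> dTs b <= dTs a.
Proof.
  intros hab hb hgap. apply (ge_of_derive_le0 L dTs ddTs a b); try lra.
  - intros x hx. apply temp_derivatives. lra.
  - intros x _. apply temp_continuous; tauto.
  - intros x hx. pose proof (solid_equation x ltac:(lra)). pose proof (hgap x hx).
    pose proof ks_eff_pos. nra.
Qed.

(* Where the solid lies below the fluid, [Ts'] decreases and [Tf'] is controlled by the
   growing flux, so the slope gap cannot fall below its value at the right end. *)
Lemma dgap_lower_bound s b : 0 <= s < b -> b <= L -> (forall y, s < y < b -> gap y <= 0) ->
  forall y, s < y < b -> dTs b - Rmax (dTf b) 0 <= dgap y.
Proof.
  intros hsb hb hgap y hy.
  assert (hs : forall t, y < t < b -> gap t <= 0) by (intros; apply hgap; lra).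
  pose proof (dTs_antitone y b ltac:(lra) hb hs).
  pose proof (flux_antitone y b ltac:(lra) hb hs).
  assert (dTf y <= Rmax (dTf b) 0); [| unfold dgap; lra].
  assert (hexp : exp (conv / kf_eff * y) <= exp (conv / kf_eff * b)).
  { apply Rlt_le, exp_increasing. pose proof kf_eff_pos. pose proof conv_pos.
    assert (0 < conv / kf_eff) by (apply Rdiv_lt_0_compat; lra). nra. }
  rewrite (dTf_of_flux y). pose proof (exp_pos (conv / kf_eff * y)).
  destruct (Rle_lt_dec 0 (flux b)).
  - apply Rle_trans with (dTf b); [rewrite (dTf_of_flux b); nra | apply Rmax_l].
  - apply Rle_trans with 0; [nra | apply Rmax_r].
Qed.

Lemma gap_neg_left_of b : 0 < b <= L -> gap b <= 0 -> 0 < dgap b ->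
  exists b1, 0 < b1 < b /\ forall y, b1 <= y < b -> gap y < 0.
Proof.
  intros hb hgb hdb.
  destruct (continuous_gt0_near (fun t => dgap (clamp L t)) b (dgap_continuous b))
    as [d [hd Hd]]; [rewrite clamp_id; unfold inI; lra |].
  exists (b - Rmin d b / 2).
  pose proof (Rmin_l d b). pose proof (Rmin_r d b).
  assert (0 < Rmin d b) by (apply Rmin_glb_lt; lra).
  split; [lra |]. intros y hy.
  enough (gap y < gap b) by lra.
  apply (lt_of_derive_gt0 L gap dgap y b); try lra.
  - intros x hx. apply gap_derive. lra.
  - intros x _. apply gap_continuous.
  - intros x hx. specialize (Hd x ltac:(apply Rabs_def1; lra)).
    rewrite clamp_id in Hd; [exact Hd | unfold inI; lra].
Qed.

Lemma no_steeper_solid_below_fluid b : 0 < b <= L -> gap b <= 0 -> 0 < dTs b -> dTf b < dTs b ->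
  False.
Proof.
  intros hb hgb hvb huv.
  destruct (gap_neg_left_of b hb hgb ltac:(unfold dgap; lra)) as [b1 [hb1 hneg]].
  destruct (last_root (fun t => gap (clamp L t)) 0 b1) as [s [hs [hgs hlast]]];
    [lra | intros; apply gap_continuous | .. ].
  { rewrite clamp_id by (unfold inI; lra). rewrite gap_0; lra. }
  { rewrite clamp_id by (unfold inI; lra). apply hneg; lra. }
  rewrite clamp_id in hgs by (unfold inI; lra).
  assert (hle : forall y, s < y < b -> gap y <= 0).
  { intros y hy. destruct (Rle_lt_dec y b1).
    - specialize (hlast y ltac:(lra)). rewrite clamp_id in hlast by (unfold inI; lra). lra.
    - apply Rlt_le, hneg; lra. }
  destruct (mean_value_on_I L gap dgap s b) as [c [hc E]]; try lra.
  { intros x hx. apply gap_derive. lra. }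
  { intros x _. apply gap_continuous. }
  pose proof (dgap_lower_bound s b ltac:(lra) ltac:(lra) hle c hc).
  assert (0 < dTs b - Rmax (dTf b) 0) by (unfold Rmax; destruct Rle_dec; lra).
  nra.
Qed.

Lemma gap_L_pos : 0 < gap L.
Proof.
  destruct (Rlt_le_dec 0 (gap L)) as [h | h]; [exact h | exfalso].
  pose proof ks_eff_pos. pose proof conv_pos. pose proof dTs_L. pose proof dTf_L.
  assert (0 < hv / conv) by (apply Rdiv_lt_0_compat; lra).
  assert (0 < dTs L) by nra.
  apply (no_steeper_solid_below_fluid L); [lra | exact h | assumption | nra].
Qed.

Lemma flux_L_pos : 0 < flux L.
Proof.
  unfold flux. apply Rmult_lt_0_compat; [apply exp_pos |]. rewrite dTf_L.
  pose proof conv_pos. pose proof gap_L_pos.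
  apply Rmult_lt_0_compat; [apply Rdiv_lt_0_compat |]; lra.
Qed.

(* At a root [b] of the gap with [Tf' b > 0], [Ts' b <= Tf' b] would make [gap''(b) < 0]
   and hence the gap negative just right of [b]. *)
Lemma dgap_pos_at_root b : 0 < b < L -> gap b = 0 -> 0 < dTf b ->
  (forall y, b < y <= L -> 0 < gap y) -> dTf b < dTs b.
Proof.
  intros hb hgb hub hpos.
  destruct (Rlt_le_dec (dTf b) (dTs b)) as [h | h]; [exact h | exfalso].
  assert (hdd : ddTs b - ddTf b < 0).
  { pose proof (solid_equation b hb). pose proof (fluid_equation b hb).
    pose proof kf_eff_pos. pose proof ks_eff_pos. pose proof conv_pos.
    rewrite hgb in *. assert (ddTs b = 0) by nra.
    assert (0 < kf_eff * ddTf b) by nra. nra. }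
  destruct (derive_lt0_right dgap b _ (dgap_derive b hb) hdd ltac:(unfold dgap; lra)) as [e [he He]].
  set (y := b + Rmin e (L - b) / 2).
  pose proof (Rmin_l e (L - b)). pose proof (Rmin_r e (L - b)).
  assert (0 < Rmin e (L - b)) by (apply Rmin_glb_lt; lra).
  destruct (mean_value_on_I L gap dgap b y) as [c [hc E]]; try (unfold y; lra).
  { intros x hx. apply gap_derive. unfold y in hx; lra. }
  { intros x _. apply gap_continuous. }
  specialize (He c ltac:(unfold y in hc; lra)). specialize (hpos y ltac:(unfold y; lra)).
  unfold y in *. nra.
Qed.

Lemma gap_nonneg y : inI L y -> 0 <= Ts y - Tf y.
Proof.
  intros hy. destruct (Rle_lt_dec 0 (gap y)) as [h | h]; [exact h | exfalso].
  assert (hy0 : 0 < y) by (destruct (Req_dec y 0) as [-> | ]; [rewrite gap_0 in h; lra | unfold inI in hy; lra]).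
  pose proof gap_L_pos.
  destruct (last_root (fun x => - gap (clamp L x)) y L) as [b [hb [hgb hlast]]];
    [unfold inI in hy; lra | intros; now apply continuous_Ropp, gap_continuous | ..];
    rewrite ?clamp_id by (unfold inI in *; lra); try lra.
  rewrite clamp_id in hgb by (unfold inI in *; lra).
  assert (hpos : forall x, b < x <= L -> 0 < gap x).
  { intros x hx. specialize (hlast x hx). rewrite clamp_id in hlast by (unfold inI in *; lra). lra. }
  assert (hfb : 0 < flux b).
  { apply Rlt_le_trans with (flux L); [apply flux_L_pos |].
    apply flux_monotone; try lra. intros x hx. apply Rlt_le, hpos. lra. }
  assert (hub : 0 < dTf b) by (rewrite dTf_of_flux; pose proof (exp_pos (conv / kf_eff * b)); nra).
  assert (dTf b < dTs b) by (apply dgap_pos_at_root; auto; lra).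
  apply (no_steeper_solid_below_fluid b); lra.
Qed.

Lemma dTf_pos y : inI L y -> 0 < dTf y.
Proof.
  intros hy. rewrite dTf_of_flux. apply Rmult_lt_0_compat; [| apply exp_pos].
  apply Rlt_le_trans with (flux L); [apply flux_L_pos |].
  unfold inI in hy. apply flux_monotone; try lra.
  intros x hx. apply gap_nonneg. unfold inI; lra.
Qed.

Lemma Tf_ge_Tb y : inI L y -> Tb <= Tf y.
Proof.
  intros hy. destruct hT as [_ [_ [_ [h0 _]]]]. rewrite <- h0. unfold inI in hy.
  apply (le_of_derive_ge0 L Tf dTf 0 y); try lra.
  - intros x hx; apply temp_derivatives; lra.
  - intros x _. apply temp_continuous; tauto.
  - intros x hx; apply Rlt_le, dTf_pos; unfold inI; lra.
Qed.

End TemperatureProfile.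

(** * Picard iteration *)

Lemma continuous_of_is_derive (f : R -> R) x l : is_derive f x l -> continuous f x.
Proof. intros H. apply (@ex_derive_continuous R_AbsRing R_NormedModule). now exists l. Qed.

Lemma is_derive_RInt_lower (g : R -> R) b y : (forall t, continuous g t) ->
  is_derive (fun a => RInt g a b) y (- g y).
Proof.
  intros hg. apply (is_derive_RInt' g _ y b); [| apply hg].
  apply filter_forall. intros a. apply (@RInt_correct R_CompleteNormedModule).
  apply (@ex_RInt_continuous R_CompleteNormedModule). intros; apply hg.
Qed.

Lemma half_pow_antitone m n : (m <= n)%nat -> (/ 2) ^ n <= (/ 2) ^ m.
Proof.
  induction 1 as [| n _ IH]; [lra |].
  simpl. pose proof (pow_lt (/ 2) n ltac:(lra)). lra.
Qed.

Lemma half_pow_small e : 0 < e -> exists N, (/ 2) ^ N < e.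
Proof.
  intros he. destruct (pow_lt_1_zero (/ 2) ltac:(rewrite Rabs_right; lra) e he) as [N HN].
  exists N. specialize (HN N (le_n _)). rewrite Rabs_right in HN; [exact HN |].
  apply Rle_ge, pow_le; lra.
Qed.

Lemma eq0_of_abs_le_half_pow (a B : R) : (forall n, Rabs a <= B * (/ 2) ^ n) -> a = 0.
Proof.
  intros H. destruct (Req_dec a 0) as [h | h]; [exact h | exfalso].
  assert (ha : 0 < Rabs a) by (apply Rabs_pos_lt; auto).
  assert (hB : 0 < B) by (specialize (H O); simpl in H; lra).
  destruct (half_pow_small (Rabs a / B)) as [N HN]; [now apply Rdiv_lt_0_compat |].
  specialize (H N). apply (Rmult_lt_compat_l B) in HN; [| lra].
  replace (B * (Rabs a / B)) with (Rabs a) in HN by (field; lra). lra.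
Qed.

Section PicardIteration.
Variables (L zL M K : R) (G : R -> R -> R).
Hypotheses (hL : 0 < L)
  (hM : forall t w, Rabs (G t w) <= M)
  (hLip : forall t w1 w2, Rabs (G t w1 - G t w2) <= K * Rabs (w1 - w2))
  (hGc : forall x : R -> R, (forall t, continuous x t) -> forall t, continuous (fun s => G s (x s)) t).

Definition picard_map (x : R -> R) (y : R) : R := zL - RInt (fun s => G s (x s)) (clamp L y) L.

Fixpoint picard_iter (n : nat) : R -> R :=
  match n with O => fun _ => zL | S n => picard_map (picard_iter n) end.

Lemma rhs_bound_nonneg : 0 <= M.
Proof. pose proof (hM 0 0). pose proof (Rabs_pos (G 0 0)). lra. Qed.

Lemma rhs_lipschitz_nonneg : 0 <= K.
Proof.
  pose proof (hLip 0 1 0) as h. pose proof (Rabs_pos (G 0 1 - G 0 0)).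
  rewrite Rminus_0_r, Rabs_R1 in h. lra.
Qed.

Lemma ex_RInt_rhs x a b : (forall t, continuous x t) -> ex_RInt (fun s => G s (x s)) a b.
Proof. intros hx; apply (@ex_RInt_continuous R_CompleteNormedModule); intros; now apply hGc. Qed.

Lemma continuous_picard_map x : (forall t, continuous x t) -> forall t, continuous (picard_map x) t.
Proof.
  intros hx t. apply continuous_Rminus; [apply continuous_const |].
  apply (continuous_comp (clamp L) (fun a => RInt (fun s => G s (x s)) a L));
    [apply continuous_clamp; lra |].
  eapply continuous_of_is_derive. apply is_derive_RInt_lower. now apply hGc.
Qed.

Lemma continuous_picard_iter n : forall t, continuous (picard_iter n) t.
Proof.
  induction n; simpl; [intros; apply continuous_const |]. now apply continuous_picard_map.
Qed.

Lemma picard_map_diff x x' y : (forall t, continuous x t) -> (forall t, continuous x' t) ->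
  picard_map x y - picard_map x' y = - RInt (fun s => G s (x s) - G s (x' s)) (clamp L y) L.
Proof.
  intros hx hx'. unfold picard_map.
  rewrite (RInt_minus (fun s => G s (x s)) (fun s => G s (x' s))) by now apply ex_RInt_rhs.
  unfold minus, plus, opp; simpl. ring.
Qed.

Lemma RInt_exp_weight_le c B : 0 <= c <= L -> 0 <= B ->
  RInt (fun t => K * B * exp (2 * K * (L - t))) c L <= B * exp (2 * K * (L - c)) / 2.
Proof.
  intros hc hB. set (P t := - (B / 2) * exp (2 * K * (L - t))).
  assert (H : is_RInt (fun t => K * B * exp (2 * K * (L - t))) c L (minus (P L) (P c))).
  { apply (is_RInt_derive P).
    - intros x _. unfold P. auto_derive; [auto |]. replace (L + - x) with (L - x) by ring. field.
    - intros x _. apply continuous_Rmult; [apply continuous_const |].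
      apply continuous_exp_comp, continuous_Rmult; [apply continuous_const |].
      apply continuous_Rminus; [apply continuous_const | apply continuous_id]. }
  rewrite (is_RInt_unique _ _ _ _ H). unfold minus, plus, opp, P; simpl.
  replace (L - L) with 0 by ring. rewrite Rmult_0_r, exp_0. lra.
Qed.

(* Bielecki's trick: in the norm weighted by [exp (2 K (L - y))], the Picard map is a
   contraction of ratio 1/2 on the whole interval. *)
Lemma picard_iter_step_weighted n y : Rabs (picard_iter (S n) y - picard_iter n y)
  <= L * M * (/ 2) ^ n * exp (2 * K * (L - clamp L y)).
Proof.
  revert y. pose proof rhs_bound_nonneg. pose proof rhs_lipschitz_nonneg. induction n as [| n IH]; intros y;
    pose proof (clamp_inI L y ltac:(lra)) as hc; unfold inI in hc; set (c := clamp L y) in *.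
  - cbn [picard_iter]. unfold picard_map. fold c.
    replace (zL - RInt (fun s => G s zL) c L - zL) with (- RInt (fun s => G s zL) c L) by ring.
    rewrite Rabs_Ropp.
    eapply Rle_trans; [apply abs_RInt_le_const; [lra | apply ex_RInt_rhs, continuous_const | intros; apply hM] |].
    assert (1 <= exp (2 * K * (L - c))) by (pose proof (exp_ineq1_le (2 * K * (L - c))); nra).
    assert (0 <= L * M) by nra. nra.
  - change (Rabs (picard_map (picard_iter (S n)) y - picard_map (picard_iter n) y)
      <= L * M * (/ 2) ^ S n * exp (2 * K * (L - c))).
    rewrite picard_map_diff, Rabs_Ropp by apply continuous_picard_iter. fold c.
    assert (hcont : forall z, continuous (fun s => G s (picard_iter (S n) s) - G s (picard_iter n s)) z).
    { intros z. apply continuous_Rminus; apply hGc, continuous_picard_iter. }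
    eapply Rle_trans; [apply abs_RInt_le; [lra | now apply (@ex_RInt_continuous R_CompleteNormedModule)] |].
    eapply Rle_trans.
    { apply (RInt_le _ (fun t => K * (L * M * (/ 2) ^ n) * exp (2 * K * (L - t)))); [lra | | |].
      - apply (@ex_RInt_continuous R_CompleteNormedModule). intros z _. now apply continuous_Rabs_comp.
      - apply (@ex_RInt_continuous R_CompleteNormedModule). intros z _.
        apply continuous_Rmult; [apply continuous_const |].
        apply continuous_exp_comp, continuous_Rmult; [apply continuous_const |].
        apply continuous_Rminus; [apply continuous_const | apply continuous_id].
      - intros x hx. eapply Rle_trans; [apply hLip |].
        specialize (IH x). rewrite clamp_id in IH by (unfold inI; lra).
        rewrite Rmult_assoc. apply Rmult_le_compat_l; lra. }
    eapply Rle_trans; [apply RInt_exp_weight_le; [lra |] |].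
    { apply Rmult_le_pos; [nra | apply pow_le; lra]. }
    simpl. lra.
Qed.

Let iter_bound := 2 * L * M * exp (2 * K * L).

Lemma iter_bound_nonneg : 0 <= iter_bound.
Proof.
  unfold iter_bound. pose proof rhs_bound_nonneg. pose proof (exp_pos (2 * K * L)).
  apply Rmult_le_pos; [nra | lra].
Qed.

Lemma picard_iter_step n y : Rabs (picard_iter (S n) y - picard_iter n y) <= iter_bound / 2 * (/ 2) ^ n.
Proof.
  eapply Rle_trans; [apply picard_iter_step_weighted |].
  pose proof (clamp_inI L y ltac:(lra)) as hc. unfold inI in hc.
  assert (hle : 2 * K * (L - clamp L y) <= 2 * K * L) by (pose proof rhs_lipschitz_nonneg; nra).
  assert (exp (2 * K * (L - clamp L y)) <= exp (2 * K * L))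
    by (destruct (Rle_lt_or_eq_dec _ _ hle) as [hlt | ->]; [apply Rlt_le, exp_increasing, hlt | lra]).
  assert (0 <= L * M * (/ 2) ^ n) by (pose proof rhs_bound_nonneg; apply Rmult_le_pos; [nra | apply pow_le; lra]).
  unfold iter_bound. nra.
Qed.

Lemma picard_iter_cauchy n m y : (n <= m)%nat ->
  Rabs (picard_iter m y - picard_iter n y) <= iter_bound * (/ 2) ^ n.
Proof.
  intros hnm. apply Rle_trans with (iter_bound * ((/ 2) ^ n - (/ 2) ^ m));
    [| pose proof (pow_le (/ 2) m ltac:(lra)); pose proof iter_bound_nonneg; nra].
  induction hnm as [| m _ IH]; [rewrite !Rminus_diag, Rabs_R0; lra |].
  replace (picard_iter (S m) y - picard_iter n y)
    with ((picard_iter (S m) y - picard_iter m y) + (picard_iter m y - picard_iter n y)) by ring.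
  eapply Rle_trans; [apply Rabs_triang |].
  replace (iter_bound * ((/ 2) ^ n - (/ 2) ^ S m))
    with (iter_bound * ((/ 2) ^ n - (/ 2) ^ m) + iter_bound / 2 * (/ 2) ^ m)
    by (simpl; field).
  pose proof (picard_iter_step m y). lra.
Qed.

Definition picard_limit (y : R) : R := Lim_seq (fun n => picard_iter n y).

Lemma picard_iter_cvg y : is_lim_seq (fun n => picard_iter n y) (picard_limit y).
Proof.
  apply Lim_seq_correct', ex_lim_seq_cauchy_corr. intros eps.
  pose proof iter_bound_nonneg.
  destruct (half_pow_small (eps / (iter_bound + 1))) as [N HN]; [apply Rdiv_lt_0_compat; [apply cond_pos | lra] |].
  assert (hN : iter_bound * (/ 2) ^ N < eps).
  { apply (Rmult_lt_compat_l (iter_bound + 1)) in HN; [| lra].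
    replace ((iter_bound + 1) * (eps / (iter_bound + 1))) with (pos eps) in HN by (field; lra).
    pose proof (pow_lt (/ 2) N ltac:(lra)). nra. }
  exists N. intros n m hn hm.
  destruct (Nat.le_ge_cases n m) as [h | h]; [rewrite Rabs_minus_sym |];
    (eapply Rle_lt_trans; [apply picard_iter_cauchy; exact h |]).
  - pose proof (half_pow_antitone N n hn). nra.
  - pose proof (half_pow_antitone N m hm). nra.
Qed.

Lemma picard_limit_uniform n y : Rabs (picard_limit y - picard_iter n y) <= iter_bound * (/ 2) ^ n.
Proof.
  destruct (Rle_lt_dec (Rabs (picard_limit y - picard_iter n y)) (iter_bound * (/ 2) ^ n)) as [h | h];
    [exact h | exfalso].
  pose proof (picard_iter_cvg y) as Hc. apply is_lim_seq_Reals in Hc.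
  destruct (Hc (Rabs (picard_limit y - picard_iter n y) - iter_bound * (/ 2) ^ n) ltac:(lra)) as [N HN].
  set (m := Nat.max N n).
  specialize (HN m (Nat.le_max_l _ _)). unfold R_dist in HN.
  pose proof (picard_iter_cauchy n m y (Nat.le_max_r _ _)).
  pose proof (Rabs_triang (- (picard_iter m y - picard_limit y)) (picard_iter m y - picard_iter n y)) as htri.
  rewrite Rabs_Ropp in htri. replace (- (picard_iter m y - picard_limit y) + (picard_iter m y - picard_iter n y))
    with (picard_limit y - picard_iter n y) in htri by ring.
  lra.
Qed.

Lemma continuous_picard_limit t : continuous picard_limit t.
Proof.
  apply continuity_pt_filterlim. intros eps he. pose proof iter_bound_nonneg.
  destruct (half_pow_small (eps / 3 / (iter_bound + 1))) as [N HN]; [apply Rdiv_lt_0_compat; lra |].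
  assert (hN : iter_bound * (/ 2) ^ N < eps / 3).
  { apply (Rmult_lt_compat_l (iter_bound + 1)) in HN; [| lra].
    replace ((iter_bound + 1) * (eps / 3 / (iter_bound + 1))) with (eps / 3) in HN by (field; lra).
    pose proof (pow_lt (/ 2) N ltac:(lra)). nra. }
  pose proof (continuous_picard_iter N t) as hc. apply continuity_pt_filterlim in hc.
  destruct (hc (eps / 3) ltac:(lra)) as [d [hd Hd]].
  exists d; split; [exact hd |]. intros x [_ hx]. simpl in *. unfold R_dist in *.
  assert (Rabs (picard_iter N x - picard_iter N t) < eps / 3).
  { destruct (Req_dec x t) as [-> | ne]; [rewrite Rminus_diag, Rabs_R0; lra |].
    apply Hd. split; [split; [exact I | congruence] | exact hx]. }
  pose proof (picard_limit_uniform N x). pose proof (picard_limit_uniform N t).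
  replace (picard_limit x - picard_limit t) with ((picard_limit x - picard_iter N x)
    + (picard_iter N x - picard_iter N t) + - (picard_limit t - picard_iter N t)) by ring.
  pose proof (Rabs_triang (picard_limit x - picard_iter N x) (picard_iter N x - picard_iter N t)).
  pose proof (Rabs_triang ((picard_limit x - picard_iter N x) + (picard_iter N x - picard_iter N t))
    (- (picard_limit t - picard_iter N t))) as htri.
  rewrite Rabs_Ropp in htri. lra.
Qed.

Lemma picard_limit_fixed y : picard_limit y = picard_map picard_limit y.
Proof.
  apply Rminus_diag_uniq, (eq0_of_abs_le_half_pow _ (iter_bound + L * K * iter_bound)). intros n.
  pose proof iter_bound_nonneg. pose proof rhs_lipschitz_nonneg. pose proof (pow_lt (/ 2) n ltac:(lra)).
  assert (h1 : Rabs (picard_limit y - picard_iter (S n) y) <= iter_bound * (/ 2) ^ n).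
  { eapply Rle_trans; [apply picard_limit_uniform |].
    pose proof (half_pow_antitone n (S n) ltac:(lia)). nra. }
  assert (h2 : Rabs (picard_map (picard_iter n) y - picard_map picard_limit y) <= L * K * iter_bound * (/ 2) ^ n).
  { rewrite picard_map_diff, Rabs_Ropp by (apply continuous_picard_iter || apply continuous_picard_limit).
    pose proof (clamp_inI L y ltac:(lra)) as hc. unfold inI in hc.
    eapply Rle_trans; [apply abs_RInt_le_const; [lra | | ] |].
    - apply (@ex_RInt_continuous R_CompleteNormedModule). intros z _.
      apply continuous_Rminus; apply hGc; [apply continuous_picard_iter | apply continuous_picard_limit].
    - intros t _. eapply Rle_trans; [apply hLip |].
      apply Rmult_le_compat_l; [lra |]. rewrite Rabs_minus_sym. apply picard_limit_uniform.
    - assert (0 <= K * (iter_bound * (/ 2) ^ n)) by (apply Rmult_le_pos; nra). nra. }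
  change (picard_iter (S n) y) with (picard_map (picard_iter n) y) in h1.
  pose proof (Rabs_triang (picard_limit y - picard_map (picard_iter n) y)
    (picard_map (picard_iter n) y - picard_map picard_limit y)) as htri.
  replace (picard_limit y - picard_map (picard_iter n) y + (picard_map (picard_iter n) y - picard_map picard_limit y))
    with (picard_limit y - picard_map picard_limit y) in htri by ring.
  lra.
Qed.

End PicardIteration.

Lemma picard_exists (L zL M K : R) (G : R -> R -> R) : 0 < L ->
  (forall t w, Rabs (G t w) <= M) ->
  (forall t w1 w2, Rabs (G t w1 - G t w2) <= K * Rabs (w1 - w2)) ->
  (forall x : R -> R, (forall t, continuous x t) -> forall t, continuous (fun s => G s (x s)) t) ->
  exists z : R -> R, (forall t, continuous z t) /\ z L = zL /\
    (forall y, 0 < y < L -> is_derive z y (G y (z y))).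
Proof.
  intros hL hM hLip hGc. set (z := picard_limit L zL G).
  assert (hz : forall t, continuous z t) by (eapply continuous_picard_limit; eauto).
  assert (hfix : forall y, z y = picard_map L zL G z y) by (intros; eapply picard_limit_fixed; eauto).
  exists z. split; [exact hz | split].
  - rewrite hfix. unfold picard_map. rewrite clamp_id by (unfold inI; lra).
    rewrite RInt_point. unfold zero; simpl. ring.
  - intros y hy. apply is_derive_ext with (picard_map L zL G z); [intros t; symmetry; apply hfix |].
    apply (is_derive_ext_loc (fun b => zL - RInt (fun s => G s (z s)) b L)).
    + apply (filter_imp (fun t => clamp L t = t)); [| now apply clamp_locally].
      intros t ht. unfold picard_map. now rewrite ht.
    + replace (G y (z y)) with (0 - - G y (z y)) by ring.
      apply (is_derive_minus (fun _ => zL)); [apply (@is_derive_const R_AbsRing R_NormedModule) |].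
      apply (is_derive_RInt_lower (fun s => G s (z s))). now apply hGc.
Qed.

(** * The density equation *)

Definition z_rhs (a B T c w : R) : R := 2 * w * (a + B * w) / (T - c * w).

Lemma z_rhs_lipschitz (a Am T Tm B c zL d w1 w2 : R) :
  0 <= a <= Am -> T <= Tm -> 0 <= B -> 0 <= c -> 0 < d ->
  0 <= w1 <= zL -> 0 <= w2 <= zL -> d <= T - c * w1 -> d <= T - c * w2 ->
  Rabs (z_rhs a B T c w1 - z_rhs a B T c w2)
  <= 2 * (Tm * (Am + 2 * B * zL) + c * B * zL ^ 2) / d ^ 2 * Rabs (w1 - w2).
Proof.
  intros ha hT hB hc hd h1 h2 hd1 hd2. unfold z_rhs.
  assert (hT0 : 0 <= T) by nra.
  set (num := T * (a + B * (w1 + w2)) - c * B * w1 * w2).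
  replace (2 * w1 * (a + B * w1) / (T - c * w1) - 2 * w2 * (a + B * w2) / (T - c * w2))
    with (2 * (w1 - w2) * num * / ((T - c * w1) * (T - c * w2))) by (unfold num; field; lra).
  rewrite !Rabs_mult, Rabs_inv, (Rabs_right 2), (Rabs_right ((T - c * w1) * (T - c * w2))) by nra.
  set (N0 := Tm * (Am + 2 * B * zL) + c * B * zL ^ 2).
  assert (hnum : Rabs num <= N0).
  { assert (0 <= a + B * (w1 + w2) <= Am + 2 * B * zL) by nra.
    assert (0 <= T * (a + B * (w1 + w2)) <= Tm * (Am + 2 * B * zL))
      by (split; [apply Rmult_le_pos | apply Rmult_le_compat]; lra).
    assert (0 <= c * B * (w1 * w2) <= c * B * zL ^ 2).
    { assert (0 <= c * B) by nra. assert (0 <= w1 * w2 <= zL ^ 2) by (simpl; nra). nra. }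
    unfold num, N0. apply Rabs_le. replace (c * B * w1 * w2) with (c * B * (w1 * w2)) by ring. lra. }
  assert (hinv : / ((T - c * w1) * (T - c * w2)) <= / d ^ 2) by (apply Rinv_le_contravar; simpl; nra).
  assert (0 <= / ((T - c * w1) * (T - c * w2))) by (apply Rlt_le, Rinv_0_lt_compat; nra).
  pose proof (Rabs_pos (w1 - w2)). pose proof (Rabs_pos num).
  replace (2 * N0 / d ^ 2 * Rabs (w1 - w2)) with (2 * Rabs (w1 - w2) * N0 * / d ^ 2) by (field; lra).
  apply Rmult_le_compat; nra.
Qed.

Lemma z_rhs_nonneg (a B T c w : R) : 0 <= a -> 0 <= B -> 0 <= w -> 0 < T - c * w ->
  0 <= z_rhs a B T c w.
Proof.
  intros ha hB hw hd. unfold z_rhs.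
  apply Rmult_le_pos; [| apply Rlt_le, Rinv_0_lt_compat; lra].
  apply Rmult_le_pos; [lra |]. apply Rplus_le_le_0_compat; [lra | apply Rmult_le_pos; lra].
Qed.

Lemma z_rhs_bound (a Am T B c zL d w : R) :
  0 <= a <= Am -> 0 <= B -> 0 < d -> 0 <= w <= zL -> d <= T - c * w ->
  Rabs (z_rhs a B T c w) <= 2 * zL * (Am + B * zL) / d.
Proof.
  intros ha hB hd hw hdw. unfold z_rhs.
  rewrite Rabs_div, (Rabs_right (T - c * w)), Rabs_right by nra.
  assert (0 <= a + B * w <= Am + B * zL) by nra.
  unfold Rdiv. apply Rmult_le_compat; [nra | apply Rlt_le, Rinv_0_lt_compat; lra | nra | apply Rinv_le_contravar; lra].
Qed.

Section Density.
Variables (L phi kf ks hv cpf mc Ac Rg muf KD KF pHG Tb qHG : R) (Tf Ts dTf dTs ddTf ddTs : R -> R).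
Hypotheses (hL : 0 < L) (hphi : 0 < phi < 1)
  (hkf : 0 < kf) (hks : 0 < ks) (hhv : 0 < hv) (hcpf : 0 < cpf)
  (hmc : 0 < mc) (hAc : 0 < Ac) (hRg : 0 < Rg) (hmuf : 0 < muf)
  (hKD : 0 < KD) (hKF : 0 < KF) (hpHG : 0 < pHG) (hTb : 0 < Tb)
  (hT : temp_solution L phi kf ks hv cpf mc Ac Tb qHG Tf Ts dTf dTs ddTf ddTs)
  (hq : 0 < qHG)
  (hsub : pHG / (Rg * Tf L) > mc / (phi * Ac) * (1 / sqrt (Rg * Tb))).

Let mass_flux_sq := / phi ^ 2 * (mc / Ac) ^ 2.
Let heat_coeff := Rg * / (cpf * mc) * hv * Ac.
Let drag := mc / Ac * (muf / KD + mc / (KF * Ac)).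
Let rhoL := pHG / (Rg * Tf L).
Let zL := / rhoL ^ 2.
Let gap t := Ts t - Tf t.
(* [F] is the right-hand side of the equation for [z = rho^-2]; [Fc] clamps both
   arguments, which makes it globally Lipschitz. *)
Let F t w := z_rhs (heat_coeff * gap t) drag (Rg * Tf t) mass_flux_sq w.
Let Fc t w := F (clamp L t) (clamp zL w).
Let den_margin := Rg * Tb - mass_flux_sq * zL.

Lemma temp_bounds y : inI L y -> 0 <= gap y /\ Tb <= Tf y.
Proof.
  intros hy. split; [exact (gap_nonneg L phi kf ks hv cpf mc Ac Tb qHG Tf Ts dTf dTs ddTf ddTs
                   hL hphi hkf hks hhv hcpf hmc hAc hq hT y hy)
         | exact (Tf_ge_Tb L phi kf ks hv cpf mc Ac Tb qHG Tf Ts dTf dTs ddTf ddTs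
                   hL hphi hkf hks hhv hcpf hmc hAc hq hT y hy)].
Qed.

Lemma Tf_continuous x : continuous (fun t => Tf (clamp L t)) x.
Proof. apply (temp_continuous L phi kf ks hv cpf mc Ac Tb qHG Tf Ts dTf dTs ddTf ddTs hL hT); tauto. Qed.

Lemma gap_clamp_continuous x : continuous (fun t => gap (clamp L t)) x.
Proof.
  apply continuous_Rminus; [| apply Tf_continuous].
  apply (temp_continuous L phi kf ks hv cpf mc Ac Tb qHG Tf Ts dTf dTs ddTf ddTs hL hT); tauto.
Qed.

Lemma mass_flux_sq_pos : 0 < mass_flux_sq.
Proof.
  unfold mass_flux_sq.
  apply Rmult_lt_0_compat; [apply Rinv_0_lt_compat |]; apply pow_lt; [| apply Rdiv_lt_0_compat]; lra.
Qed.

Lemma heat_coeff_pos : 0 < heat_coeff.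
Proof. unfold heat_coeff. repeat apply Rmult_lt_0_compat; try lra. apply Rinv_0_lt_compat; nra. Qed.

Lemma drag_pos : 0 < drag.
Proof.
  unfold drag. apply Rmult_lt_0_compat; [apply Rdiv_lt_0_compat; lra |].
  apply Rplus_lt_0_compat; apply Rdiv_lt_0_compat; nra.
Qed.

Lemma rhoL_pos : 0 < rhoL.
Proof. unfold rhoL. destruct (temp_bounds L) as [_ h]; [unfold inI; lra |]. apply Rdiv_lt_0_compat; nra. Qed.

Lemma zL_pos : 0 < zL.
Proof. apply Rinv_0_lt_compat, pow_lt, rhoL_pos. Qed.

Lemma mass_flux_sq_lt_terminal : mass_flux_sq < Rg * Tb * rhoL ^ 2.
Proof.
  fold rhoL in hsub. set (s := sqrt (Rg * Tb)) in *. set (a := mc / (phi * Ac)) in *.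
  assert (hs : 0 < s) by (apply sqrt_lt_R0; nra).
  assert (hss : s * s = Rg * Tb) by (apply sqrt_sqrt; nra).
  assert (ha : 0 < a) by (apply Rdiv_lt_0_compat; nra).
  assert (hc : mass_flux_sq = a ^ 2) by (unfold mass_flux_sq, a; field; lra).
  assert (h : a < rhoL * s).
  { apply (Rmult_lt_compat_r s) in hsub; [| lra].
    replace (a * (1 / s) * s) with a in hsub by (field; lra). lra. }
  rewrite hc, <- hss. simpl. nra.
Qed.

Lemma den_margin_pos : 0 < den_margin.
Proof.
  unfold den_margin, zL. pose proof mass_flux_sq_lt_terminal. pose proof rhoL_pos.
  enough (mass_flux_sq / rhoL ^ 2 < Rg * Tb) by (unfold Rdiv in *; lra).
  apply (Rmult_lt_reg_r (rhoL ^ 2)); [apply pow_lt; lra |].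
  unfold Rdiv. rewrite Rmult_assoc, Rinv_l by (apply pow_nonzero; lra). lra.
Qed.

Lemma den_margin_le t w : inI L t -> 0 <= w <= zL -> den_margin <= Rg * Tf t - mass_flux_sq * w.
Proof.
  intros ht hw. destruct (temp_bounds t ht) as [_ h]. pose proof mass_flux_sq_pos. unfold den_margin.
  assert (mass_flux_sq * w <= mass_flux_sq * zL) by (apply Rmult_le_compat_l; lra). nra.
Qed.

Lemma Fc_eq_F t w : inI L t -> 0 <= w <= zL -> Fc t w = F t w.
Proof. intros ht hw. unfold Fc. now rewrite !clamp_id. Qed.

Lemma Fc_bounded_lipschitz : exists M K, (forall t w, Rabs (Fc t w) <= M) /\
  (forall t w1 w2, Rabs (Fc t w1 - Fc t w2) <= K * Rabs (w1 - w2)).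
Proof.
  destruct (bounded_on_I L gap) as [Dm hDm]; [lra | intros; apply gap_clamp_continuous |].
  destruct (bounded_on_I L Tf) as [Tm hTm]; [lra | intros; apply Tf_continuous |].
  assert (h0 : inI L 0) by (unfold inI; lra).
  destruct (temp_bounds 0 h0). pose proof (hDm 0 h0). pose proof (hTm 0 h0).
  pose proof heat_coeff_pos. pose proof drag_pos. pose proof mass_flux_sq_pos.
  pose proof den_margin_pos. pose proof zL_pos.
  assert (ha : forall t, 0 <= heat_coeff * gap (clamp L t) <= heat_coeff * Dm).
  { intros t. pose proof (clamp_inI L t ltac:(lra)) as ht. destruct (temp_bounds _ ht).
    specialize (hDm _ ht). split; [nra | apply Rmult_le_compat_l; lra]. }
  assert (hw : forall w, 0 <= clamp zL w <= zL) by (intros; apply clamp_inI; lra).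
  assert (hden : forall t w, den_margin <= Rg * Tf (clamp L t) - mass_flux_sq * clamp zL w).
  { intros; apply den_margin_le; [apply clamp_inI; lra | apply hw]. }
  set (K0 := 2 * (Rg * Tm * (heat_coeff * Dm + 2 * drag * zL) + mass_flux_sq * drag * zL ^ 2) / den_margin ^ 2).
  exists (2 * zL * (heat_coeff * Dm + drag * zL) / den_margin), K0. split.
  - intros t w. apply z_rhs_bound; auto; lra.
  - intros t w1 w2. eapply Rle_trans.
    { apply (z_rhs_lipschitz _ (heat_coeff * Dm) _ (Rg * Tm)); auto; try lra.
      pose proof (hTm _ (clamp_inI L t ltac:(lra))). nra. }
    pose proof (clamp_lipschitz zL w1 w2 ltac:(lra)). pose proof (Rabs_pos (clamp zL w1 - clamp zL w2)).
    assert (0 <= K0).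
    { unfold K0. apply Rmult_le_pos; [| apply Rlt_le, Rinv_0_lt_compat, pow_lt; lra].
      assert (0 <= Rg * Tm * (heat_coeff * Dm + 2 * drag * zL)) by (apply Rmult_le_pos; nra).
      assert (0 <= mass_flux_sq * drag * zL ^ 2) by (apply Rmult_le_pos; [nra | apply pow_le; lra]). lra. }
    fold K0. now apply Rmult_le_compat_l.
Qed.

Lemma Fc_continuous (x : R -> R) : (forall t, continuous x t) ->
  forall t, continuous (fun s => Fc s (x s)) t.
Proof.
  intros hx t. pose proof zL_pos. pose proof den_margin_pos.
  assert (cw : continuous (fun s => clamp zL (x s)) t).
  { apply (continuous_comp x (clamp zL)); [apply hx | apply continuous_clamp; lra]. }
  assert (cTf : continuous (fun s => Tf (clamp L s)) t) by (apply Tf_continuous).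
  assert (cgap : continuous (fun s => gap (clamp L s)) t) by (apply gap_clamp_continuous).
  unfold Fc, F, z_rhs. apply continuous_Rdiv.
  - apply continuous_Rmult; [apply continuous_Rmult; [apply continuous_const | exact cw] |].
    apply continuous_Rplus; apply continuous_Rmult;
      [apply continuous_const | exact cgap | apply continuous_const | exact cw].
  - apply continuous_Rminus; apply continuous_Rmult;
      [apply continuous_const | exact cTf | apply continuous_const | exact cw].
  - assert (den_margin <= Rg * Tf (clamp L t) - mass_flux_sq * clamp zL (x t)); [| lra].
    apply den_margin_le; apply clamp_inI; lra.
Qed.

Lemma Fc_nonneg t w : 0 <= Fc t w.
Proof.
  pose proof zL_pos. pose proof den_margin_pos. pose proof heat_coeff_pos. pose proof drag_pos.
  pose proof (clamp_inI zL w ltac:(lra)) as hw. pose proof (clamp_inI L t ltac:(lra)) as ht.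
  destruct (temp_bounds _ ht). pose proof (den_margin_le _ _ ht hw). unfold inI in hw.
  apply z_rhs_nonneg; [apply Rmult_le_pos | ..]; lra.
Qed.

Lemma Fc_pos t w : 0 < clamp zL w -> 0 < Fc t w.
Proof.
  intros hw0. pose proof zL_pos. pose proof den_margin_pos. pose proof heat_coeff_pos. pose proof drag_pos.
  pose proof (clamp_inI zL w ltac:(lra)) as hw. pose proof (clamp_inI L t ltac:(lra)) as ht.
  destruct (temp_bounds _ ht). pose proof (den_margin_le _ _ ht hw).
  unfold Fc, F, z_rhs, inI in *.
  apply Rmult_lt_0_compat; [| apply Rinv_0_lt_compat; lra].
  apply Rmult_lt_0_compat; [lra |].
  assert (0 <= heat_coeff * gap (clamp L t)) by (apply Rmult_le_pos; lra).
  assert (0 < drag * clamp zL w) by (apply Rmult_lt_0_compat; lra). lra.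
Qed.

Lemma Fc_zero t : Fc t 0 = 0.
Proof. unfold Fc, F, z_rhs. rewrite (clamp_id zL 0) by (pose proof zL_pos; unfold inI; lra). lra. Qed.

Section ZSolution.
Variables (z : R -> R) (K : R).
Hypotheses (hzc : forall t, continuous z t) (hzL : z L = zL)
  (hzd : forall y, 0 < y < L -> is_derive z y (Fc y (z y)))
  (hLip : forall t w1 w2, Rabs (Fc t w1 - Fc t w2) <= K * Rabs (w1 - w2)).

Lemma continuous_z_clamp x : continuous (fun t => z (clamp L t)) x.
Proof. apply (continuous_comp (clamp L) z); [apply continuous_clamp; lra | apply hzc]. Qed.

Lemma z_le_zL y : inI L y -> z y <= zL.
Proof.
  intros hy. rewrite <- hzL. unfold inI in hy.
  apply (le_of_derive_ge0 L z (fun t => Fc t (z t)) y L); try lra.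
  - intros; apply hzd; lra.
  - intros; apply continuous_z_clamp.
  - intros; apply Fc_nonneg.
Qed.

(* Since [Fc t 0 = 0], Lipschitz continuity gives [z' <= K z] where [z > 0], so
   [z exp (- K t)] is nonincreasing and [z] cannot reach [0] to the left of [L]. *)
Lemma z_pos y : inI L y -> 0 < z y.
Proof.
  intros hy. destruct (Rlt_le_dec 0 (z y)) as [h | h]; [exact h | exfalso].
  pose proof zL_pos. unfold inI in hy.
  destruct (last_root (fun t => - z (clamp L t)) y L) as [s [hs [hzs hlast]]];
    [lra | intros; apply continuous_Ropp, continuous_z_clamp | ..];
    rewrite ?clamp_id by (unfold inI; lra); try lra.
  rewrite clamp_id in hzs by (unfold inI; lra).
  assert (hpos : forall t, s < t <= L -> 0 < z t).
  { intros t ht. specialize (hlast t ht). rewrite clamp_id in hlast by (unfold inI; lra). lra. }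
  assert (Hw : z L * exp (- K * L) <= z s * exp (- K * s)).
  { apply (ge_of_derive_le0 L (fun t => z t * exp (- K * t))
      (fun t => Fc t (z t) * exp (- K * t) + z t * (- K * exp (- K * t))) s L); try lra.
    - intros x hx.
      apply (is_derive_Rmult z (fun t => exp (- K * t))); [apply hzd; lra | auto_derive; [exact I | ring]].
    - intros x _. apply continuous_Rmult; [apply continuous_z_clamp |].
      apply continuous_exp_comp, continuous_Rmult; [apply continuous_const | apply continuous_clamp; lra].
    - intros x hx. pose proof (exp_pos (- K * x)).
      assert (Fc x (z x) <= K * z x).
      { pose proof (hLip x (z x) 0) as hl. rewrite Fc_zero, !Rminus_0_r in hl.
        rewrite Rabs_right in hl by (apply Rle_ge, Fc_nonneg).
        rewrite Rabs_right in hl by (apply Rle_ge, Rlt_le, hpos; lra). exact hl. }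
      nra. }
  rewrite hzL in Hw. pose proof (exp_pos (- K * L)). nra.
Qed.

Lemma z_increasing x y : inI L x -> inI L y -> x < y -> z x < z y.
Proof.
  intros hx hy hxy. unfold inI in *.
  apply (lt_of_derive_gt0 L z (fun t => Fc t (z t)) x y); try lra.
  - intros; apply hzd; lra.
  - intros; apply continuous_z_clamp.
  - intros t ht. apply Fc_pos. rewrite clamp_id; [apply z_pos; unfold inI; lra |].
    split; [apply Rlt_le, z_pos | apply z_le_zL]; unfold inI; lra.
Qed.

Let rho y := / sqrt (z y).

Lemma rho_continuous y : inI L y -> continuous rho y.
Proof.
  intros hy. pose proof (z_pos y hy). apply continuous_Rinv_comp.
  - now apply continuous_sqrt_comp.
  - apply Rgt_not_eq, sqrt_lt_R0; lra.
Qed.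

Lemma Nden_rho y : 0 < z y -> Nden Rg phi mc Ac Tf y (rho y) = (mass_flux_sq * z y - Rg * Tf y) / z y.
Proof.
  intros hz. unfold Nden, rho. fold mass_flux_sq.
  pose proof (sqrt_lt_R0 (z y) hz). pose proof (sqrt_sqrt (z y) ltac:(lra)) as hss.
  set (s := sqrt (z y)) in *. clearbody s. rewrite <- hss. field. lra.
Qed.

Lemma rho_solution : density_solution L Rg phi hv cpf mc Ac muf KD KF pHG Tf Ts rho.
Proof.
  split; [| split].
  - intros y hy. now apply cont_within_I_of_continuous, rho_continuous.
  - intros y hy. assert (hyI : inI L y) by (unfold inI; lra).
    pose proof (z_pos y hyI) as hz. pose proof (z_le_zL y hyI).
    pose proof (den_margin_le y (z y) hyI ltac:(lra)). pose proof den_margin_pos.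
    rewrite Nden_rho by exact hz. split.
    + apply Rlt_not_eq. apply Rdiv_neg_pos; lra.
    + replace (Nbar Rg phi hv cpf mc Ac muf KD KF Tf Ts y (rho y) * rho y)
        with (Fc y (z y) * (- / (2 * z y * sqrt (z y)))).
      * exact (is_derive_comp (fun w => / sqrt w) z y _ _ (is_derive_inv_sqrt _ hz) (hzd y hy)).
      * unfold Nbar. rewrite Nden_rho, Fc_eq_F by (auto; lra).
        unfold Nnum, F, z_rhs, rho. fold heat_coeff drag.
        pose proof (sqrt_lt_R0 (z y) hz). pose proof (sqrt_sqrt (z y) ltac:(lra)) as hss.
        set (s := sqrt (z y)) in *. clearbody s. rewrite <- hss in *.
        unfold gap. field. repeat split; nra.
  - unfold rho. rewrite hzL. unfold zL. pose proof rhoL_pos.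
    rewrite sqrt_inv, sqrt_pow2, Rinv_inv by lra. reflexivity.
Qed.

Lemma rho_pos y : inI L y -> 0 < rho y.
Proof. intros hy. apply Rinv_0_lt_compat, sqrt_lt_R0, z_pos, hy. Qed.

Lemma rho_decreasing x y : inI L x -> inI L y -> x < y -> rho y < rho x.
Proof.
  intros hx hy hxy. pose proof (z_pos x hx). pose proof (z_increasing x y hx hy hxy).
  apply Rinv_lt_contravar; [apply Rmult_lt_0_compat |]; apply sqrt_lt_1 || apply sqrt_lt_R0; lra.
Qed.

Section Uniqueness.
Variable rho2 : R -> R.
Hypothesis h2 : density_solution L Rg phi hv cpf mc Ac muf KD KF pHG Tf Ts rho2.

Lemma continuous_rho2_clamp x : continuous (fun t => rho2 (clamp L t)) x.
Proof. destruct h2 as [hc _]. apply continuous_clamp_comp; [lra | exact hc]. Qed.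

(* Negative at [L] by [hsub]; a sign change would give a zero, which [density_solution]
   excludes. *)
Lemma Nden_solution_neg y : 0 < y <= L -> Nden Rg phi mc Ac Tf y (rho2 y) < 0.
Proof.
  destruct h2 as [_ [hd hrL]].
  assert (hNL : Nden Rg phi mc Ac Tf L (rho2 L) < 0).
  { unfold Nden. fold mass_flux_sq. rewrite hrL. fold rhoL. pose proof mass_flux_sq_lt_terminal. pose proof rhoL_pos.
    destruct (temp_bounds L) as [_ hTL]; [unfold inI; lra |].
    assert (Rg * Tb * rhoL ^ 2 <= Rg * Tf L * rhoL ^ 2); [apply Rmult_le_compat_r; [apply pow_le |]; nra | lra]. }
  intros hy. destruct (Rlt_le_dec (Nden Rg phi mc Ac Tf y (rho2 y)) 0) as [h | h]; [exact h | exfalso].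
  destruct (Req_dec y L) as [-> | ne]; [lra |].
  destruct (last_root (fun t => Nden Rg phi mc Ac Tf (clamp L t) (rho2 (clamp L t))) y L)
    as [s [hs [hNs _]]]; [lra | | rewrite clamp_id by (unfold inI; lra); exact h
                          | rewrite clamp_id by (unfold inI; lra); exact hNL |].
  - intros x _. unfold Nden. apply continuous_Rminus; [apply continuous_const |].
    apply continuous_Rmult; [apply continuous_Rmult; [apply continuous_const | apply Tf_continuous] |].
    apply (continuous_comp (fun t => rho2 (clamp L t)) (fun u => u ^ 2)); [apply continuous_rho2_clamp |].
    apply continuity_pt_filterlim, derivable_continuous_pt, derivable_pt_pow.
  - rewrite clamp_id in hNs by (unfold inI; lra). now apply (hd s); [lra |].
Qed.

Lemma rho2_pos y : 0 < y <= L -> 0 < rho2 y.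
Proof.
  assert (hnz : forall y, 0 < y <= L -> rho2 y <> 0).
  { intros x hx e. pose proof (Nden_solution_neg x hx) as hN. pose proof mass_flux_sq_pos.
    unfold Nden in hN. fold mass_flux_sq in hN. rewrite e in hN. simpl in hN. lra. }
  intros hy. destruct (Rlt_le_dec 0 (rho2 y)) as [h | h]; [exact h | exfalso].
  destruct h2 as [_ [_ hrL]]. fold rhoL in hrL. pose proof rhoL_pos.
  destruct (last_root (fun t => - rho2 (clamp L t)) y L) as [s [hs [hrs _]]];
    [lra | intros; apply continuous_Ropp, continuous_rho2_clamp | ..];
    rewrite ?clamp_id by (unfold inI; lra); try lra.
  rewrite clamp_id in hrs by (unfold inI; lra). apply (hnz s); lra.
Qed.

Let z2 t := / rho2 t ^ 2.

Lemma z2_bounds t : 0 < t <= L -> 0 < z2 t /\ Rg * Tf t - mass_flux_sq * z2 t > 0.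
Proof.
  intros ht. pose proof (rho2_pos t ht). pose proof (Nden_solution_neg t ht) as hN.
  unfold Nden in hN. fold mass_flux_sq in hN. unfold z2.
  split; [apply Rinv_0_lt_compat, pow_lt; lra |].
  replace (Rg * Tf t - mass_flux_sq * / rho2 t ^ 2) with ((Rg * Tf t * rho2 t ^ 2 - mass_flux_sq) / rho2 t ^ 2) by (field; lra).
  apply Rdiv_lt_0_compat; [lra | apply pow_lt; lra].
Qed.

Lemma z2_derive t : 0 < t < L -> is_derive z2 t (F t (z2 t)).
Proof.
  intros ht. destruct h2 as [_ [hd _]]. destruct (hd t ht) as [hN hrho].
  pose proof (rho2_pos t ltac:(lra)). destruct (z2_bounds t ltac:(lra)).
  assert (hinv : is_derive (fun r => / r ^ 2) (rho2 t) (- 2 / rho2 t ^ 3)) by (auto_derive; [nra | field; lra]).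
  replace (F t (z2 t)) with (Nbar Rg phi hv cpf mc Ac muf KD KF Tf Ts t (rho2 t) * rho2 t * (- 2 / rho2 t ^ 3)).
  - exact (is_derive_comp (fun r => / r ^ 2) rho2 t _ _ hinv hrho).
  - unfold F, z_rhs, z2, Nbar, Nnum, gap in *. unfold Nden in hN |- *. fold mass_flux_sq heat_coeff drag in hN |- *.
    field. repeat split; lra.
Qed.

Lemma continuous_z2_clamp x : 0 < x <= L -> continuous (fun t => z2 (clamp L t)) x.
Proof.
  intros hx. unfold z2. apply continuous_Rinv_comp.
  - apply (continuous_comp (fun t => rho2 (clamp L t)) (fun u => u ^ 2)); [apply continuous_rho2_clamp |].
    apply continuity_pt_filterlim, derivable_continuous_pt, derivable_pt_pow.
  - rewrite clamp_id by (unfold inI; lra). apply pow_nonzero, Rgt_not_eq, rho2_pos, hx.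
Qed.

Lemma z2_le_zL t : 0 < t <= L -> z2 t <= zL.
Proof.
  intros ht. replace zL with (z2 L) by (unfold z2, zL; destruct h2 as [_ [_ ->]]; reflexivity).
  apply (le_of_derive_ge0 L z2 (fun u => F u (z2 u)) t L); try lra.
  - intros; apply z2_derive; lra.
  - intros x hx. apply continuous_z2_clamp. lra.
  - intros u hu. destruct (z2_bounds u ltac:(lra)). destruct (temp_bounds u) as [hg _]; [unfold inI; lra |].
    pose proof heat_coeff_pos. pose proof drag_pos.
    apply z_rhs_nonneg; [apply Rmult_le_pos | ..]; lra.
Qed.

Lemma z2_eq_z y : 0 < y <= L -> z2 y = z y.
Proof.
  intros hy. apply (lipschitz_ode_unique_backward L Fc K z2 z y); try lra; auto.
  - intros x hx. rewrite Fc_eq_F; [apply z2_derive; lra | unfold inI; lra |].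
    destruct (z2_bounds x ltac:(lra)). split; [lra | apply z2_le_zL; lra].
  - intros x hx. apply hzd. lra.
  - intros x hx. apply continuous_z2_clamp. lra.
  - intros; apply continuous_z_clamp.
  - unfold z2. destruct h2 as [_ [_ ->]]. fold rhoL zL. now rewrite hzL.
Qed.

Lemma rho2_eq_rho y : inI L y -> rho2 y = rho y.
Proof.
  assert (hpos : forall x, 0 < x <= L -> rho2 x = rho x).
  { intros x hx. unfold rho. rewrite <- z2_eq_z by exact hx. unfold z2. pose proof (rho2_pos x hx).
    rewrite sqrt_inv, sqrt_pow2, Rinv_inv by lra. reflexivity. }
  intros hy. destruct (Req_dec y 0) as [-> | ne]; [| apply hpos; unfold inI in hy; lra].
  destruct h2 as [hc _].
  apply (cont_within_I_eq_at_0 L); [lra | apply hc; unfold inI; lra | | exact hpos].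
  apply cont_within_I_of_continuous, rho_continuous. unfold inI; lra.
Qed.

End Uniqueness.

End ZSolution.

Theorem density_ivp_well_posed : exists rho : R -> R,
    density_solution L Rg phi hv cpf mc Ac muf KD KF pHG Tf Ts rho /\
    (forall rho2 : R -> R,
       density_solution L Rg phi hv cpf mc Ac muf KD KF pHG Tf Ts rho2 ->
       forall y, inI L y -> rho2 y = rho y) /\
    (forall y, inI L y -> 0 < rho y) /\
    (forall x y, inI L x -> inI L y -> x < y -> rho y < rho x).
Proof.
  destruct Fc_bounded_lipschitz as [M [K [hM hLip]]].
  destruct (picard_exists L zL M K Fc hL hM hLip Fc_continuous) as [z [hzc [hzL hzd]]].
  exists (fun y => / sqrt (z y)).
  split; [| split; [| split]].
  - exact (rho_solution z K hzc hzL hzd hLip).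
  - intros rho2 h2. exact (rho2_eq_rho z K hzc hzL hzd hLip rho2 h2).
  - exact (rho_pos z K hzc hzL hzd hLip).
  - exact (rho_decreasing z K hzc hzL hzd hLip).
Qed.

End Density.

Theorem proposition3
  (L phi kf ks hv cpf mc Ac Rg muf KD KF pHG Tb qHG : R)
  (Tf Ts dTf dTs ddTf ddTs : R -> R)
  (hL : 0 < L) (hphi : 0 < phi < 1)
  (hkf : 0 < kf) (hks : 0 < ks) (hhv : 0 < hv) (hcpf : 0 < cpf)
  (hmc : 0 < mc) (hAc : 0 < Ac) (hRg : 0 < Rg) (hmuf : 0 < muf)
  (hKD : 0 < KD) (hKF : 0 < KF) (hpHG : 0 < pHG) (hTb : 0 < Tb)
  (hT : temp_solution L phi kf ks hv cpf mc Ac Tb qHG Tf Ts dTf dTs ddTf ddTs)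
  (hq : 0 < qHG)
  (hsub : pHG / (Rg * Tf L) > mc / (phi * Ac) * (1 / sqrt (Rg * Tb))) :
  exists rho : R -> R,
    density_solution L Rg phi hv cpf mc Ac muf KD KF pHG Tf Ts rho /\
    (forall rho2 : R -> R,
       density_solution L Rg phi hv cpf mc Ac muf KD KF pHG Tf Ts rho2 ->
       forall y, inI L y -> rho2 y = rho y) /\
    (forall y, inI L y -> 0 < rho y) /\
    (forall x y, inI L x -> inI L y -> x < y -> rho y < rho x).
Proof.
  exact (density_ivp_well_posed L phi kf ks hv cpf mc Ac Rg muf KD KF pHG Tb qHG
           Tf Ts dTf dTs ddTf ddTs hL hphi hkf hks hhv hcpf hmc hAc hRg hmuf hKD hKF hpHG hTb hT hq hsub).
Qed.
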